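(* Let $\lambda,\mu$ be partitions with at most $n$ parts (viewed as elements of $\mathbb{Z}^n$) such that $|\lambda|\ge|\mu|$. Then $$\widetilde{K}^{C_n}_{\lambda,\mu}(q)=q^{\frac{|\lambda|-|\mu|}{2}}\sum_{\gamma\in\widetilde{\mathcal{P}}_n}\ \sum_{\sigma\in S_n}(-1)^{l(\sigma)}\,c(\sigma\circ\lambda-\gamma)\,K^{A_{n-1}}_{\gamma,\mu}(q),$$ $$\widetilde{K}^{D_n}_{\lambda,\mu}(q)=q^{\frac{|\lambda|-|\mu|}{2}}\sum_{\gamma\in\widetilde{\mathcal{P}}_n}\ \sum_{\sigma\in S_n}(-1)^{l(\sigma)}\,d(\sigma\circ\lambda-\gamma)\,K^{A_{n-1}}_{\gamma,\mu}(q).$$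
   Context: Fix $n\ge1$. Notation: $x^\beta=x_1^{\beta_1}\cdots x_n^{\beta_n}$, $|\beta|=\sum_i\beta_i$, $\rho_n=(n,n-1,\dots,1)$. The symmetric group $S_n$ acts on $\mathbb{Z}^n$ by permuting coordinates; $l(\sigma)$ is the number of inversions of $\sigma$; the dot action is $\sigma\circ\beta=\sigma(\beta+\rho_n)-\rho_n$. $\widetilde{\mathcal{P}}_n=\{\gamma\in\mathbb{Z}^n:\gamma_1\ge\cdots\ge\gamma_n\}$. $q$-partition functions: $\mathcal{P}^A_q(\beta)$, $\mathcal{P}^C_q(\beta)$, $\mathcal{P}^D_q(\beta)$ are the coefficients of $x^\beta$ in respectively $\prod_{i<j}(1-qx_i/x_j)^{-1}$, $\prod_{i<j}(1-qx_i/x_j)^{-1}\prod_{r\le s}(1-qx_rx_s)^{-1}$, $\prod_{i<j}(1-qx_i/x_j)^{-1}\prod_{r<s}(1-qx_rx_s)^{-1}$ (all indices in $\{1,\dots,n\}$). $c(\beta)$ (resp. $d(\beta)$) is the coefficient of $x^{-\beta}$ in $\prod_{1\le r\le s\le n}(1-\frac1{x_rx_s})^{-1}$ (resp. $\prod_{1\le r<s\le n}(1-\frac1{x_rx_s})^{-1}$). For $\gamma,\mu\in\mathbb{Z}^n$: $K^{A_{n-1}}_{\gamma,\mu}(q)=\sum_{\sigma\in S_n}(-1)^{l(\sigma)}\mathcal{P}^A_q(\sigma(\gamma+\rho_n)-(\mu+\rho_n))$ (for partitions this is the usual Kostka–Foulkes polynomial), and for $X\in\{C,D\}$: $\widetilde{K}^{X_n}_{\lambda,\mu}(q)=\sum_{\sigma\in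 S_n}(-1)^{l(\sigma)}\mathcal{P}^X_q(\sigma(\lambda+\rho_n)-(\mu+\rho_n))$. *)

From HB Require Import structures.
From mathcomp Require Import all_boot all_order all_algebra all_fingroup.
Set Implicit Arguments. Unset Strict Implicit. Unset Printing Implicit Defensive.
Import Order.TTheory GRing.Theory Num.Theory.
Local Open Scope ring_scope.

(* Vectors in Z^n, coordinates indexed by 'I_n (0-based: coordinate i <-> x_(i+1)). *)
Notation vec n := {ffun 'I_n -> int}.

Definition wt n (b : vec n) : int := \sum_(i < n) b i.

Definition rho n : vec n := [ffun i : 'I_n => ((n - i)%N)%:Z].

Definition evec n (i : 'I_n) : vec n := [ffun k => ((k == i) : nat)%:Z].

Definition pact n (s : 'S_n) (b : vec n) : vec n := [ffun i => b (s^-1%g i)].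

Definition dot n (s : 'S_n) (b : vec n) : vec n := pact s (b + rho n) - rho n.

(* sign (-1)^{l(s)}; the parity of the number of inversions is odd_perm s *)
Definition sgn (R : pzRingType) n (s : 'S_n) : R := (-1) ^+ odd_perm s.

Definition nonincr n (g : vec n) : bool :=
  [forall i : 'I_n, forall j : 'I_n, (i <= j)%N ==> (g j <= g i)].

Definition is_partition n (l : vec n) : bool :=
  nonincr l && [forall i : 'I_n, 0 <= l i].

(* Positive roots indexing the factors of the products. *)
Definition rootsA n : seq (vec n) :=
  [seq evec i - evec j | i : 'I_n <- enum 'I_n, j <- filter (fun j : 'I_n => (i < j)%N) (enum 'I_n)].
Definition pairsC n : seq (vec n) :=
  [seq evec r + evec s | r : 'I_n <- enum 'I_n, s <- filter (fun s : 'I_n => (r <= s)%N) (enum 'I_n)].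
Definition pairsD n : seq (vec n) :=
  [seq evec r + evec s | r : 'I_n <- enum 'I_n, s <- filter (fun s : 'I_n => (r < s)%N) (enum 'I_n)].

(* Coefficient of x^b in prod_{a in rs} (1 - q x^a)^{-1}:
   the sum of q^(sum m) over multiplicity vectors m : rs -> N with
   sum_k m_k rs_k = b.  Every multiplicity in such a decomposition is
   bounded by sum_i |b_i| for the root systems used below,
   so restricting to m_k <= sum_i |b_i| loses nothing. *)
Definition vpf (R : pzRingType) n (rs : seq (vec n)) (q : R) (b : vec n) : R :=
  \sum_(m : {ffun 'I_(size rs) -> 'I_((\sum_(i < n) `|b i|)%N).+1}
         | \sum_(k < size rs) rs`_k *+ m k == b)
     q ^+ (\sum_(k < size rs) (m k : nat))%N.

Definition PA (R : pzRingType) n (q : R) (b : vec n) : R := vpf (rootsA n) q b.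
Definition PC (R : pzRingType) n (q : R) (b : vec n) : R :=
  vpf (rootsA n ++ pairsC n) q b.
Definition PD (R : pzRingType) n (q : R) (b : vec n) : R :=
  vpf (rootsA n ++ pairsD n) q b.

(* c(b), d(b): coefficient of x^{-b} in prod (1 - 1/(x_r x_s))^{-1}, i.e. the
   number of ways to write b as a sum of e_r + e_s (r <= s, resp. r < s). *)
Definition cfun (R : pzRingType) n (b : vec n) : R := vpf (pairsC n) 1 b.
Definition dfun (R : pzRingType) n (b : vec n) : R := vpf (pairsD n) 1 b.

Definition KA (R : pzRingType) n (q : R) (g mu : vec n) : R :=
  \sum_(s : 'S_n) sgn R s * PA q (pact s (g + rho n) - (mu + rho n)).
Definition KC (R : pzRingType) n (q : R) (la mu : vec n) : R :=
  \sum_(s : 'S_n) sgn R s * PC q (pact s (la + rho n) - (mu + rho n)).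
Definition KD (R : pzRingType) n (q : R) (la mu : vec n) : R :=
  \sum_(s : 'S_n) sgn R s * PD q (pact s (la + rho n) - (mu + rho n)).

Definition fsum_eq (T : eqType) (R : nmodType) (P : pred T) (F : T -> R) (v : R)
  : Prop :=
  exists s : seq T, [/\ uniq s, all P s,
    (forall x, P x -> x \notin s -> F x = 0) & v = \sum_(x <- s) F x].

From HB Require Import structures.
From mathcomp Require Import all_boot all_order all_algebra all_fingroup.
From mathcomp Require Import zify ring lra.
Set Implicit Arguments. Unset Strict Implicit. Unset Printing Implicit Defensive.
Import Order.TTheory GRing.Theory Num.Theory.
Local Open Scope ring_scope.

(* Split the roots of type C_n (resp. D_n) into the roots e_i - e_j of type A
   and the vectors e_r + e_s:  P^C_q(b) = sum_m q^|m| P^A_q(b - sum_j m_j r_j).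
   Type A roots have weight 0 and the r_j weight 2, so a nonzero term has
   2|m| = |la| - |mu|; with q = t^2 this extracts t^(|la|-|mu|).  Grouping the
   remaining terms by k = s o la - sum_j m_j r_j gives
     K^C_{la,mu} = t^(|la|-|mu|) sum_k P^A_q(k - mu) F(k),
     F(k) = sum_s sgn(s) c(s o la - k).
   As c is S_n-invariant, F(t o k) = sgn(t) F(k): F vanishes when k + rho has a
   repeated entry, and otherwise k = t o g for a unique nonincreasing g, so the
   sum over t reassembles K^A_{g,mu}.  All roots have nonnegative partial sums,
   which bounds every multiplicity by |b|_1 and keeps all sums finite. *)

Lemma big_supp_uniq_seq (T : eqType) (V : nmodType) (A B : seq T) (F : T -> V) :
  uniq A -> uniq B -> (forall x, F x != 0 -> (x \in A) && (x \in B)) ->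
  \sum_(x <- A) F x = \sum_(x <- B) F x.
Proof.
move=> uA uB suppF; apply: perm_big_supp; apply: uniq_perm; rewrite ?filter_uniq // => x.
by rewrite !mem_filter; case: (eqVneq (F x) 0) => //= /suppF /andP[-> ->].
Qed.

Lemma big_partition_seq (I : finType) (T : eqType) (V : nmodType)
    (ks : seq T) (f : I -> T) (F : I -> V) :
  uniq ks -> (forall i, F i != 0 -> f i \in ks) ->
  \sum_i F i = \sum_(k <- ks) \sum_(i | f i == k) F i.
Proof.
move=> uks suppF; rewrite [RHS](exchange_big_dep predT) //=; apply: eq_bigr => i _.
rewrite (eq_bigl (pred1 (f i))) => [|k]; last by rewrite /= eq_sym.
rewrite -big_filter; have [fi_ks | fi_ks] := boolP (f i \in ks).
  by rewrite filter_pred1_uniq // big_seq1.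
have -> : F i = 0 by apply/eqP; apply: contraNT fi_ks => /suppF.
by rewrite big1.
Qed.

Lemma sum_neq0 (I : finType) (V : nmodType) (F : I -> V) :
  \sum_i F i != 0 -> exists i, F i != 0.
Proof.
move=> sum_nz; apply/existsP; apply: contraNT sum_nz => /existsPn F0.
by rewrite big1 // => i _; apply/eqP/negPn/F0.
Qed.

Section Vectors.
Variable n : nat.
Implicit Types (a b v : vec n) (s t : 'S_n).

Lemma pact_is_zmod_morphism s : zmod_morphism (pact s).
Proof. by move=> a b; apply/ffunP => i; rewrite !ffunE. Qed.
HB.instance Definition _ s :=
  GRing.isZmodMorphism.Build (vec n) (vec n) (pact s) (pact_is_zmod_morphism s).

Lemma wt_is_zmod_morphism : zmod_morphism (@wt n).
Proof. by move=> a b; rewrite /wt -sumrB; apply: eq_bigr => i _; rewrite !ffunE. Qed.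
HB.instance Definition _ :=
  GRing.isZmodMorphism.Build (vec n) int (@wt n) wt_is_zmod_morphism.

Definition psum (c : 'I_n) b : int := \sum_(i < n | (i <= c)%N) b i.

Lemma psum_is_zmod_morphism c : zmod_morphism (psum c).
Proof. by move=> a b; rewrite /psum -sumrB; apply: eq_bigr => i _; rewrite !ffunE. Qed.
HB.instance Definition _ c :=
  GRing.isZmodMorphism.Build (vec n) int (psum c) (psum_is_zmod_morphism c).

Lemma pactM s t b : pact s (pact t b) = pact (t * s)%g b.
Proof. by apply/ffunP => i; rewrite !ffunE invMg permM. Qed.

Lemma pact1 b : pact 1 b = b.
Proof. by apply/ffunP => i; rewrite !ffunE invg1 perm1. Qed.

Lemma pactK s : cancel (pact s) (pact s^-1).
Proof. by move=> b; rewrite pactM mulgV pact1. Qed.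

Lemma pact_inj s : injective (pact s).
Proof. exact: can_inj (pactK s). Qed.

Lemma pact_perm s b i : pact s b (s i) = b i.
Proof. by rewrite ffunE permK. Qed.

Lemma evec_perm s i : pact s (evec i) = evec (s i).
Proof.
apply/ffunP => l; rewrite !ffunE; congr (Posz (nat_of_bool _)).
by apply/eqP/eqP => [<-|->]; rewrite ?permKV ?permK.
Qed.

Lemma big_pact {R : Type} {idx : R} (op : Monoid.com_law idx) (F : int -> R) s b :
  \big[op/idx]_i F (pact s b i) = \big[op/idx]_i F (b i).
Proof.
rewrite (reindex_inj (@perm_inj _ s)) /=.
by apply: eq_bigr => i _; rewrite pact_perm.
Qed.

Lemma wt_pact s b : wt (pact s b) = wt b.
Proof. exact: (big_pact _ id). Qed.

Lemma wt_dot s b : wt (dot s b) = wt b.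
Proof. by rewrite /dot raddfB /= wt_pact raddfD /= addrK. Qed.

Lemma wt_evec (i : 'I_n) : wt (evec i) = 1.
Proof.
by rewrite /wt (bigD1 i) //= big1 ?addr0 => [|j /negbTE ji]; rewrite ffunE ?eqxx ?ji.
Qed.

Lemma psum_evec (c i : 'I_n) : psum c (evec i) = (i <= c)%N.
Proof.
rewrite /psum big_mkcond (bigD1 i) //= big1 ?addr0 => [|j /negbTE ji]; rewrite ffunE ?eqxx ?ji.
  by case: leqP.
by case: leqP.
Qed.

End Vectors.

Lemma sgnM (R : pzRingType) n (s t : 'S_n) : sgn R (s * t)%g = sgn R s * sgn R t.
Proof. by rewrite /sgn odd_permM signr_addb. Qed.

Lemma sgn_tperm (R : pzRingType) n (i j : 'I_n) : i != j -> sgn R (tperm i j) = -1.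
Proof. by move=> ij; rewrite /sgn odd_tperm ij expr1. Qed.

Section MultiplicityBound.
Variable n : nat.

Definition psum_ge0 (v : vec n) := forall c, 0 <= psum c v.
Definition psum_pos (r : vec n) := psum_ge0 r /\ exists c, 0 < psum c r.

Lemma psum_le_norm c (b : vec n) : psum c b <= (\sum_i `|b i|)%N%:Z.
Proof.
rewrite /psum big_mkcond -natz natr_sum; apply: ler_sum => i _.
by rewrite natz abszE; case: ifP => _; rewrite ?ler_norm.
Qed.

Lemma le_l1 (b : vec n) i : b i <= (\sum_l `|b l|)%N%:Z.
Proof.
apply: le_trans (ler_norm _) _.
by rewrite -natz natr_sum (bigD1 i) //= natz abszE lerDl sumr_ge0.
Qed.

Lemma psum_ge0_sum (I : finType) (r : I -> vec n) (m : I -> nat) :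
  (forall i, psum_ge0 (r i)) -> psum_ge0 (\sum_i r i *+ m i).
Proof.
move=> r_ge0 c; rewrite raddf_sum /=; apply: sumr_ge0 => i _.
by rewrite raddfMn mulrn_wge0 ?r_ge0.
Qed.

(* Each multiplicity is at most a partial sum of [b], hence at most the
   l1-norm of [b]; this is what makes the truncation in [vpf] harmless. *)
Lemma mult_le_norm (I : finType) (r : I -> vec n) (m : I -> nat) y b :
  (forall i, psum_pos (r i)) -> psum_ge0 y -> \sum_i r i *+ m i + y = b ->
  forall i, (m i <= \sum_l `|b l|)%N.
Proof.
move=> r_pos y_ge0 <- i; have [_ [c r_gt0]] := r_pos i.
rewrite -lez_nat; apply: le_trans (psum_le_norm c _).
rewrite raddfD raddf_sum (bigD1 i) //= -addrA raddfMn.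
have rest_ge0 : 0 <= \sum_(j | j != i) psum c (r j *+ m j) + psum c y.
  by apply: addr_ge0 => //; apply: sumr_ge0 => j _; rewrite raddfMn mulrn_wge0 ?(r_pos j).1.
apply: le_trans (_ : _ <= psum c (r i) *+ m i) _; last by rewrite lerDl.
by rewrite -natz lerMn2r; apply/orP; right; lia.
Qed.

Lemma mult_le_norm0 (I : finType) (r : I -> vec n) (m : I -> nat) b :
  (forall i, psum_pos (r i)) -> \sum_i r i *+ m i = b ->
  forall i, (m i <= \sum_l `|b l|)%N.
Proof.
by move=> r_pos m_sol; apply: (mult_le_norm r_pos (y := 0)) => [c|]; rewrite ?raddf0 ?addr0.
Qed.

End MultiplicityBound.

Section PartitionFunction.
Variables (n : nat) (R : pzRingType).
Implicit Types (q : R) (b : vec n).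

Definition vpfN (I : finType) (r : I -> vec n) q (N : nat) b : R :=
  \sum_(m : {ffun I -> 'I_N.+1} | \sum_i r i *+ m i == b) q ^+ (\sum_i (m i : nat))%N.

Lemma vpfE (rs : seq (vec n)) q b :
  vpf rs q b = vpfN (fun k : 'I_(size rs) => rs`_k) q (\sum_i `|b i|) b.
Proof. by []. Qed.

Lemma vpfN_sol (I : finType) (r : I -> vec n) q N b :
  vpfN r q N b != 0 -> exists m : I -> nat, \sum_i r i *+ m i = b.
Proof.
rewrite /vpfN; case: (pickP (fun m : {ffun I -> 'I_N.+1} => \sum_i r i *+ m i == b)).
  by move=> m /eqP m_sol _; exists (fun i => nat_of_ord (m i)).
by move=> no_sol; rewrite big_pred0 ?eqxx.
Qed.

Lemma vpfN_widen (I : finType) (r : I -> vec n) q N1 N2 b :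
  (forall m : I -> nat, \sum_i r i *+ m i = b -> forall i, (m i <= minn N1 N2)%N) ->
  vpfN r q N1 b = vpfN r q N2 b.
Proof.
wlog le12 : N1 N2 / (N1 <= N2)%N.
  move=> wlog_le bound; case: (leqP N1 N2) => [le12|/ltnW le21]; first exact: wlog_le.
  by symmetry; apply: wlog_le => // m /bound; rewrite minnC.
rewrite (minn_idPl le12) => bound.
pose up (m : {ffun I -> 'I_N1.+1}) : {ffun I -> 'I_N2.+1} :=
  [ffun i => widen_ord (le12 : (N1.+1 <= N2.+1)%N) (m i)].
pose down (m : {ffun I -> 'I_N2.+1}) : {ffun I -> 'I_N1.+1} := [ffun i => inord (m i)].
rewrite /vpfN (reindex_onto up down) => [|m /eqP m_sol]; last first.
  apply/ffunP => i; apply: val_inj; rewrite !ffunE /= inordK // ltnS.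
  exact: (bound (fun i => m i)).
apply: eq_big => m; last by move=> _; congr (_ ^+ _); apply: eq_bigr => i _; rewrite ffunE.
have -> : down (up m) == m by apply/eqP/ffunP => i; apply: val_inj; rewrite !ffunE /= inordK.
by rewrite andbT; congr (_ == _); apply: eq_bigr => i _; rewrite ffunE.
Qed.

Lemma vpfN_reindex (I J : finType) (e : J -> I) (r : I -> vec n) (r' : J -> vec n) q N b :
  bijective e -> r' =1 r \o e -> vpfN r' q N b = vpfN r q N b.
Proof.
case=> e' ee' e'e r'E; rewrite /vpfN.
have e_onto := onW_bij predT (Bijective ee' e'e).
pose h (m : {ffun J -> 'I_N.+1}) : {ffun I -> 'I_N.+1} := [ffun i => m (e' i)].
have h_bij : bijective h.
  exists (fun m : {ffun I -> 'I_N.+1} => [ffun j => m (e j)]) => m;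
  by apply/ffunP => x; rewrite !ffunE ?ee' ?e'e.
rewrite (reindex h); last exact: onW_bij.
apply: eq_big => m.
  by congr (_ == _); rewrite (reindex e) //=; apply: eq_bigr => j _; rewrite r'E ffunE ee'.
by move=> _; congr (_ ^+ _); rewrite (reindex e) //=; apply: eq_bigr => j _; rewrite ffunE ee'.
Qed.

Lemma vpfN_sumType (I1 I2 : finType) (r1 : I1 -> vec n) (r2 : I2 -> vec n) q N b :
  vpfN (fun i : I1 + I2 => match i with inl x => r1 x | inr y => r2 y end) q N b =
  \sum_(m2 : {ffun I2 -> 'I_N.+1})
     q ^+ (\sum_j (m2 j : nat))%N * vpfN r1 q N (b - \sum_j r2 j *+ m2 j).
Proof.
rewrite /vpfN; symmetry.
under eq_bigr => m2 _ do rewrite mulr_sumr big_mkcond.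
rewrite pair_big /= [RHS]big_mkcond.
pose glue (p : {ffun I2 -> 'I_N.+1} * {ffun I1 -> 'I_N.+1}) : {ffun I1 + I2 -> 'I_N.+1} :=
  [ffun i => match i with inl x => p.2 x | inr y => p.1 y end].
have glue_bij : bijective glue.
  exists (fun m : {ffun I1 + I2 -> 'I_N.+1} => ([ffun y => m (inr y)], [ffun x => m (inl x)])).
    by case=> m2 m1; congr pair; apply/ffunP => x; rewrite !ffunE.
  by move=> m; apply/ffunP => -[x|y]; rewrite !ffunE.
rewrite [RHS](reindex glue); last exact: onW_bij.
apply: eq_bigr => -[m2 m1] _; rewrite !big_sumType /glue /=.
under [X in X + _ == b]eq_bigr do rewrite ffunE.
under [X in _ + X == b]eq_bigr do rewrite ffunE.
under [X in (X + _)%N]eq_bigr do rewrite ffunE.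
under [X in (_ + X)%N]eq_bigr do rewrite ffunE.
have -> : (\sum_i r1 i *+ m1 i + \sum_i r2 i *+ m2 i == b)
        = (\sum_i r1 i *+ m1 i == b - \sum_j r2 j *+ m2 j).
  by apply/eqP/eqP => sol; [rewrite -sol addrK | rewrite sol subrK].
by case: ifP => _; rewrite // addnC exprD.
Qed.

Lemma vpfN_cat (rs1 rs2 : seq (vec n)) q N b :
  vpfN (fun k : 'I_(size (rs1 ++ rs2)) => (rs1 ++ rs2)`_k) q N b =
  \sum_(m2 : {ffun 'I_(size rs2) -> 'I_N.+1}) q ^+ (\sum_j (m2 j : nat))%N *
    vpfN (fun k : 'I_(size rs1) => rs1`_k) q N (b - \sum_(j < size rs2) rs2`_j *+ m2 j).
Proof.
rewrite -vpfN_sumType.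
pose e (x : 'I_(size rs1) + 'I_(size rs2)) := cast_ord (esym (size_cat rs1 rs2)) (unsplit x).
have e_bij : bijective e.
  exists (fun k => split (cast_ord (size_cat rs1 rs2) k)) => x.
    by rewrite /e cast_ordKV unsplitK.
  by rewrite /e splitK cast_ordK.
symmetry; apply: (vpfN_reindex _ _ _ e_bij) => -[x|y] /=; rewrite nth_cat /=.
  by rewrite ltn_ord.
by rewrite ltnNge leq_addr /= addKn.
Qed.

Lemma vpf_pact (P : seq (vec n)) q (s : 'S_n) b :
  uniq P -> (forall r, r \in P -> pact s r \in P) -> vpf P q (pact s b) = vpf P q b.
Proof.
move=> P_uniq P_stable; rewrite !vpfE (big_pact _ (fun x => `|x|%N)).
have idx_lt (k : 'I_(size P)) : (index (pact s (P`_k)%R) P < size P)%N.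
  by rewrite index_mem P_stable ?mem_nth.
pose pi k := Ordinal (idx_lt k).
have piE k : P`_(pi k) = pact s (P`_k) by rewrite nth_index ?P_stable ?mem_nth.
have pi_inj : injective pi.
  move=> k k' pi_eq; have := congr1 (fun j : 'I_(size P) => P`_j) pi_eq.
  rewrite /= !piE => /pact_inj /eqP.
  by rewrite nth_uniq // => /eqP; apply: val_inj.
rewrite -(vpfN_reindex _ _ _ (injF_bij pi_inj) (r' := fun k : 'I_(size P) => pact s (P`_k)));
  last by move=> k; rewrite /= piE.
rewrite /vpfN; apply: eq_bigl => m.
rewrite -[RHS](inj_eq (@pact_inj _ s)) raddf_sum /=.
by congr (_ == _); apply: eq_bigr => i _; rewrite raddfMn.
Qed.

End PartitionFunction.

Section Roots.
Variable n : nat.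
Implicit Types (r v : vec n) (a b c : 'I_n).

Lemma psum_pos_rootsA r : r \in rootsA n -> psum_pos r.
Proof.
case/allpairsPdep => a [b [_ + ->]]; rewrite mem_filter => /andP[ab _].
split=> [c|]; last by exists a; rewrite raddfB /= !psum_evec leqnn leqNgt ab.
by rewrite raddfB /= !psum_evec; case: (leqP b c) => bc; rewrite ?(leq_trans (ltnW ab) bc).
Qed.

Lemma wt_rootsA r : r \in rootsA n -> wt r = 0.
Proof. by case/allpairsPdep => a [b [_ _ ->]]; rewrite raddfB /= !wt_evec subrr. Qed.

Lemma psum_pos_ge0 r : (forall l, 0 <= r l) -> 0 < wt r -> psum_pos r.
Proof.
move=> r_ge0 wt_gt0; split=> [c|]; first exact: sumr_ge0.
have [l r_l] : exists l, r l != 0 by apply: sum_neq0; rewrite gt_eqF.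
exists l; rewrite /psum (bigD1 l) //=; apply: ltr_wpDr; first exact: sumr_ge0.
by rewrite lt_def r_l r_ge0.
Qed.

Definition pairs_with (rl : rel 'I_n) : seq (vec n) :=
  [seq evec a + evec b | a <- enum 'I_n, b <- filter (rl a) (enum 'I_n)].

Lemma mem_pairs_with (rl : rel 'I_n) r :
  reflect (exists a b, rl a b /\ r = evec a + evec b) (r \in pairs_with rl).
Proof.
apply: (iffP allpairsPdep) => [[a [b [_ + ->]]]|[a [b [ab ->]]]].
  by rewrite mem_filter => /andP[ab _]; exists a, b.
by exists a, b; rewrite mem_enum mem_filter ab mem_enum.
Qed.

Lemma pairs_with_ge0 (rl : rel 'I_n) r l : r \in pairs_with rl -> 0 <= r l.
Proof. by case/mem_pairs_with => a [b [_ ->]]; rewrite !ffunE. Qed.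

Lemma wt_pairs_with (rl : rel 'I_n) r : r \in pairs_with rl -> wt r = 2.
Proof. by case/mem_pairs_with => a [b [_ ->]]; rewrite raddfD /= !wt_evec. Qed.

Lemma evec_add_inj a b a' b' : (a <= b)%N -> (a' <= b')%N ->
  evec a + evec b = evec a' + evec b' -> a = a' /\ b = b'.
Proof.
move=> ab ab' E.
have supp (x y z : 'I_n) : ((evec x + evec y) z != 0) = (z == x) || (z == y).
  by rewrite !ffunE; case: (z == x); case: (z == y).
have a_in : (a == a') || (a == b') by rewrite -supp -E supp eqxx.
have a'_in : (a' == a) || (a' == b) by rewrite -supp E supp eqxx.
have aa' : a = a'.
  case/orP: a_in => /eqP // aE; case/orP: a'_in => /eqP // a'E.
  by apply/val_inj/eqP; rewrite eqn_leq; apply/andP; split; [rewrite a'E | rewrite aE].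
split=> //; move: E; rewrite aa' => /addrI /(congr1 (fun v : vec n => v b)).
by rewrite !ffunE eqxx; case: eqVneq => // _ [].
Qed.

Lemma uniq_pairs_with (rl : rel 'I_n) :
  (forall a b, rl a b -> (a <= b)%N) -> uniq (pairs_with rl).
Proof.
move=> rl_le; apply: allpairs_uniq_dep => [|a _|]; first exact: enum_uniq.
  by rewrite filter_uniq ?enum_uniq.
move=> _ _ /allpairsPdep[a [b [_ + ->]]] /allpairsPdep[a' [b' [_ + ->]]] /=.
rewrite !mem_filter => /andP[/rl_le ab _] /andP[/rl_le ab' _].
by case/(evec_add_inj ab ab') => -> ->.
Qed.

Lemma pact_pairs_with (rl : rel 'I_n) s r :
  (forall a b, a != b -> rl a b || rl b a) -> (forall a c, rl a a -> rl c c) ->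
  r \in pairs_with rl -> pact s r \in pairs_with rl.
Proof.
move=> rl_total rl_diag /mem_pairs_with[a [b [ab ->]]]; apply/mem_pairs_with.
rewrite raddfD /= !evec_perm; have [ba|a_neq_b] := eqVneq a b.
  by exists (s a), (s a); rewrite -ba in ab *; split => //; apply: rl_diag ab.
have /orP[sab|sba] : rl (s a) (s b) || rl (s b) (s a).
  by apply: rl_total; rewrite (inj_eq perm_inj).
  by exists (s a), (s b).
by exists (s b), (s a); rewrite addrC.
Qed.

End Roots.

Section IncreasingPerm.
Variable n : nat.

Lemma homo_ord_ge (f : 'I_n -> 'I_n) :
  {homo f : i j / (i < j)%N} -> forall i : 'I_n, (i <= f i)%N.
Proof.
move=> f_homo [k lt_kn]; elim: k lt_kn => // k IH lt_kn.
have lt_k := ltnW lt_kn.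
exact: leq_ltn_trans (IH lt_k) (f_homo (Ordinal lt_k) (Ordinal lt_kn) (ltnSn k)).
Qed.

Lemma perm_homo_eq1 (s : 'S_n) : {homo s : i j / (i < j)%N} -> s = 1%g.
Proof.
move=> s_homo; have sV_homo : {homo s^-1%g : i j / (i < j)%N}.
  move=> i j ij; rewrite ltnNge leq_eqVlt negb_or; apply/andP; split.
    by apply: contraTneq ij => /val_inj/(congr1 s); rewrite !permKV => ->; rewrite ltnn.
  by apply: contraTN ij => /s_homo; rewrite !permKV => ji; rewrite ltnNge (ltnW ji).
apply/permP => i; apply: val_inj; apply/eqP; rewrite perm1 eqn_leq (homo_ord_ge s_homo) andbT.
by have := homo_ord_ge sV_homo (s i); rewrite permK.
Qed.

End IncreasingPerm.

Section DotAction.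
Variable n : nat.
Implicit Types (v w g : vec n) (s t : 'S_n).

Definition sdecr w := forall i j : 'I_n, (i < j)%N -> w j < w i.

Lemma sdecr_le w : sdecr w -> forall i j : 'I_n, (i <= j)%N -> w j <= w i.
Proof.
move=> w_sdecr i j; rewrite leq_eqVlt => /orP[/eqP/val_inj -> //|/w_sdecr/ltW //].
Qed.

Lemma Posz_subn_ord (i : 'I_n) : ((n - i)%N)%:Z = n%:Z - i%:Z.
Proof. by rewrite subzn // ltnW. Qed.

Lemma nonincr_sdecr g : nonincr g -> sdecr (g + rho n).
Proof.
move=> /forallP g_nonincr i j ij; have /forallP/(_ j) := g_nonincr i.
by rewrite (ltnW ij) /= !ffunE !Posz_subn_ord; move: ij; rewrite -ltz_nat; lra.
Qed.

Lemma sdecr_gap w (i j : 'I_n) : sdecr w -> (i <= j)%N -> w j + j%:Z <= w i + i%:Z.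
Proof.
move=> w_sdecr /subnKC; move: (j - i)%N => d; elim: d j => [|d IH] j jE.
  by have -> : j = i by apply: val_inj; rewrite /= -jE addn0.
have lt_id : (i + d < n)%N by have := ltn_ord j; lia.
have := IH (Ordinal lt_id) erefl; have : w j < w (Ordinal lt_id).
  by apply: w_sdecr; rewrite -jE /= addnS.
by rewrite -jE /= !PoszD; lia.
Qed.

Lemma sdecr_nonincr w : sdecr w -> nonincr (w - rho n).
Proof.
move=> w_sdecr; apply/forallP => i; apply/forallP => j; apply/implyP => ij.
by rewrite !ffunE !Posz_subn_ord; have := sdecr_gap w_sdecr ij; lra.
Qed.

Lemma sdecr_pact_eq1 w s : sdecr w -> sdecr (pact s w) -> s = 1%g.
Proof.
move=> w_sdecr sw_sdecr; rewrite -[s]invgK (@perm_homo_eq1 _ s^-1) ?invg1 // => i j ij.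
rewrite ltnNge; apply: contraTN (sw_sdecr i j ij) => /(sdecr_le w_sdecr).
by rewrite !ffunE leNgt => ->.
Qed.

Definition rank v (i : 'I_n) := #|[set j | v i < v j]|.

Lemma rank_lt v (i : 'I_n) : (rank v i < n)%N.
Proof.
rewrite -[n in (_ < n)%N]card_ord -cardsT; apply: proper_card; rewrite properT.
by apply/eqP => /setP/(_ i); rewrite !inE ltxx.
Qed.

Lemma rank_lt_lt v (i j : 'I_n) : v i < v j -> (rank v j < rank v i)%N.
Proof.
move=> vij; apply: proper_card; apply/properP; split.
  by apply/subsetP => l; rewrite !inE; apply: lt_trans.
by exists j; rewrite !inE ?vij ?ltxx.
Qed.

Lemma exists_sdecr_pact v : injective v -> exists t w, sdecr w /\ v = pact t w.
Proof.
move=> v_inj; pose rk i := Ordinal (rank_lt v i).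
have rk_inj : injective rk.
  move=> i j /(congr1 val) /= rij; apply: v_inj; apply/eqP; rewrite eq_le.
  by rewrite !leNgt; apply/andP; split; apply/negP => /rank_lt_lt; rewrite rij ltnn.
have [t tE] : {t : 'S_n | t =1 rk} by exists (perm rk_inj); apply: permE.
exists t^-1%g, (pact t v); split; last by rewrite pactK.
have rkE l : rank v ((t^-1)%g l) = l by rewrite -{2}(permKV t l) tE.
move=> k k' kk'; rewrite !ffunE ltNge le_eqVlt; apply/norP; split.
  by apply: contraTneq kk' => /v_inj/(congr1 t); rewrite !permKV => ->; rewrite ltnn.
by apply/negP => /rank_lt_lt; rewrite !rkE ltnNge (ltnW kk').
Qed.

Lemma dotM s t b : dot (s * t)%g b = dot t (dot s b).
Proof. by rewrite /dot subrK pactM. Qed.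

Lemma dotB t a b : dot t a - dot t b = pact t (a - b).
Proof. by apply/ffunP => i; rewrite !ffunE; ring. Qed.

Lemma dot_nonincr_inj t t' g g' :
  nonincr g -> nonincr g' -> dot t g = dot t' g' -> t = t' /\ g = g'.
Proof.
move=> g_ni g'_ni /(congr1 (fun v => pact t^-1 (v + rho n))).
rewrite /dot !subrK pactK pactM => E.
have t't : (t' * t^-1)%g = 1%g.
  by apply: (sdecr_pact_eq1 (nonincr_sdecr g'_ni)); rewrite -E; apply: nonincr_sdecr.
have <- : t = t' by rewrite -[t]mul1g -t't mulgKV.
by split=> //; apply: (addIr (rho n)); rewrite E t't pact1.
Qed.

Lemma dot_tperm_fix k (i j : 'I_n) : (k + rho n) i = (k + rho n) j -> dot (tperm i j) k = k.
Proof.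
move=> kij; have kr_fix : pact (tperm i j) (k + rho n) = k + rho n.
  by apply/ffunP => l; rewrite ffunE tpermV; case: tpermP => [->|->|].
by rewrite /dot kr_fix addrK.
Qed.

Lemma exists_dot_nonincr k : injective (k + rho n) -> exists t g, nonincr g /\ k = dot t g.
Proof.
move=> /exists_sdecr_pact[t [w [w_sdecr kE]]]; exists t, (w - rho n).
by split; [apply: sdecr_nonincr | rewrite /dot subrK -kE addrK].
Qed.

End DotAction.

Section Box.
Variable n : nat.

Definition box (B : nat) : seq (vec n) :=
  [seq [ffun i => (f i : nat)%:Z - B%:Z]
     | f : {ffun 'I_n -> 'I_(B.*2).+1} <- enum {ffun 'I_n -> 'I_(B.*2).+1}].

Lemma uniq_box B : uniq (box B).
Proof.
rewrite map_inj_uniq ?enum_uniq // => f g /ffunP fg; apply/ffunP => i; apply: val_inj.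
by have := fg i; rewrite !ffunE => /addIr [].
Qed.

Lemma mem_box B (v : vec n) : (forall i, `|v i| <= B%:Z) -> v \in box B.
Proof.
move=> v_le; apply/mapP.
have lt_vB i : (`|(v i + B%:Z)%R| < (B.*2).+1)%N.
  by rewrite ltnS -lez_nat abszE -muln2 PoszM; have := v_le i; case: (v i) => k /=; lia.
exists [ffun i => Ordinal (lt_vB i)]; first by rewrite mem_enum.
apply/ffunP => i; rewrite !ffunE /= abszE ger0_norm ?addrK //.
by have := v_le i; lia.
Qed.

Lemma norm_le_wt (v : vec n) (M : nat) :
  (forall i, v i <= M%:Z) -> forall i, `|v i| <= (`|wt v| + n * M)%N%:Z.
Proof.
move=> v_le i; have n_gt0 : (0 < n)%N by apply: leq_ltn_trans (ltn_ord i).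
have rest_le : \sum_(j | j != i) v j <= (n * M)%N%:Z.
  apply: le_trans (_ : \sum_(j < n) M%:Z <= _).
    by rewrite [X in _ <= X](bigD1 i) //= -[X in X <= _]add0r lerD ?ler_sum.
  by rewrite sumr_const card_ord -mulr_natr natz PoszM mulrC.
have wtE : wt v = v i + \sum_(j | j != i) v j by rewrite /wt (bigD1 i).
have := v_le i; have := ler_norm (wt v); have := ler_norm (- wt v); rewrite normrN.
rewrite PoszD abszE PoszM ler_norml; move: rest_le wtE; rewrite PoszM; nia.
Qed.

End Box.

Section Expansion.
Variables (n : nat) (la mu : vec n) (P : seq (vec n)).
Hypothesis P_uniq : uniq P.
Hypothesis P_stable : forall s r, r \in P -> pact s r \in P.
Hypothesis P_ge0 : forall r l, r \in P -> 0 <= r l.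
Hypothesis P_wt : forall r, r \in P -> wt r = 2.

Local Notation q := ('X^2 : {poly int}).
Local Notation mset N := {ffun 'I_(size P) -> 'I_N.+1}.

Definition Pmu (x : vec n) := PA q (x - mu).
Definition ncomp (x : vec n) := vpf P (1 : {poly int}) x.
Definition alt (k : vec n) := \sum_(s : 'S_n) sgn _ s * ncomp (dot s la - k).
Definition combP N (m : mset N) := \sum_(j < size P) P`_j *+ m j.
Definition beta (s : 'S_n) := pact s (la + rho n) - (mu + rho n).

(* A priori bounds on the multiplicities in the expansions of [beta s], on the
   coordinates of the vectors [k] that contribute, and the resulting box. *)
Definition Nmult := (\sum_(s : 'S_n) \sum_i `|beta s i|)%N.
Definition Mcoord := ((\sum_i `|la i|) + n)%N.
Definition Bbox := (`|wt mu|%N + n * Mcoord)%N.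

Lemma psum_pos_mem r : r \in P -> psum_pos r.
Proof. by move=> rP; apply: psum_pos_ge0 => [l|]; rewrite ?P_ge0 ?P_wt. Qed.

Lemma psum_pos_P (k : 'I_(size P)) : psum_pos P`_k.
Proof. exact/psum_pos_mem/mem_nth. Qed.

Lemma psum_ge0_combP (m : 'I_(size P) -> nat) : psum_ge0 (\sum_(j < size P) P`_j *+ m j).
Proof. exact: psum_ge0_sum (fun j => (psum_pos_P j).1). Qed.

Lemma psum_pos_rootsA_nth (k : 'I_(size (rootsA n))) : psum_pos (rootsA n)`_k.
Proof. exact/psum_pos_rootsA/mem_nth. Qed.

Lemma psum_ge0_combA (m : 'I_(size (rootsA n)) -> nat) :
  psum_ge0 (\sum_(j < size (rootsA n)) (rootsA n)`_j *+ m j).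
Proof. exact: psum_ge0_sum (fun j => (psum_pos_rootsA_nth j).1). Qed.

Lemma wt_PA (y : vec n) : PA q y != 0 -> wt y = 0.
Proof.
rewrite /PA vpfE => /vpfN_sol[m <-]; rewrite raddf_sum big1 // => k _.
by rewrite raddfMn /= wt_rootsA ?mul0rn ?mem_nth.
Qed.

Lemma wt_Pmu x : Pmu x != 0 -> wt x = wt mu.
Proof. by move/wt_PA/eqP; rewrite raddfB subr_eq0 => /eqP. Qed.

Lemma sum_P_ge0 (m : 'I_(size P) -> nat) (l : 'I_n) :
  0 <= (\sum_(j < size P) P`_j *+ m j) l.
Proof.
by rewrite sum_ffunE sumr_ge0 // => k _; rewrite ffunMnE mulrn_wge0 ?P_ge0 ?mem_nth.
Qed.

Lemma wt_combP N (m : mset N) : wt (combP m) = (2 * \sum_j (m j : nat))%N%:Z.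
Proof.
rewrite raddf_sum PoszM -[Posz (\sum_j _)%N]natz natr_sum mulr_sumr; apply: eq_bigr => j _.
by rewrite raddfMn /= P_wt ?mem_nth // mulr_natr.
Qed.

Lemma ncomp_ge0 x : ncomp x != 0 -> forall l, 0 <= x l.
Proof. by rewrite /ncomp vpfE => /vpfN_sol[m <-] l; apply: sum_P_ge0. Qed.

Lemma dot_le s i : dot s la i <= Mcoord%:Z.
Proof.
rewrite /dot !ffunE !Posz_subn_ord PoszD; set j := (s^-1)%g i.
have := le_l1 la j; move: (la j) => a; have := ltn_ord i; lia.
Qed.

Lemma alt_le k : alt k != 0 -> forall i, k i <= Mcoord%:Z.
Proof.
case/sum_neq0 => s; rewrite mulf_eq0 negb_or => /andP[_ /ncomp_ge0 k_le] i.
have := k_le i; rewrite [(_ - k) i]ffunE [(- k) i]ffunE subr_ge0 => ki.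
exact: le_trans ki (dot_le s i).
Qed.

Lemma mem_Bbox (x : vec n) : (forall i, x i <= Mcoord%:Z) -> wt x = wt mu -> x \in box n Bbox.
Proof. by move=> x_le x_wt; apply: mem_box; rewrite /Bbox -x_wt; apply: norm_le_wt. Qed.

Lemma beta_le s : (\sum_i `|beta s i| <= Nmult)%N.
Proof. by rewrite /Nmult (bigD1 s) //= leq_addr. Qed.

Lemma beta_dot s : beta s = dot s la - mu.
Proof. by apply/ffunP => i; rewrite !ffunE; ring. Qed.

Lemma vpf_beta s :
  vpf (rootsA n ++ P) q (beta s) =
  'X ^+ `|wt la - wt mu|%N * \sum_(m : mset Nmult) Pmu (dot s la - combP m).
Proof.
have cat_pos (k : 'I_(size (rootsA n ++ P))) : psum_pos (rootsA n ++ P)`_k.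
  by have := mem_nth 0 (ltn_ord k); rewrite mem_cat => /orP[/psum_pos_rootsA|/psum_pos_mem].
rewrite vpfE (vpfN_widen q (N2 := Nmult)) => [|m m_sol i]; last first.
  have m_le := mult_le_norm0 cat_pos m_sol i.
  by rewrite leq_min m_le (leq_trans m_le) ?beta_le.
rewrite vpfN_cat mulr_sumr; apply: eq_bigr => m _.
have PA_Pmu : vpfN (fun k : 'I_(size (rootsA n)) => (rootsA n)`_k) q Nmult (beta s - combP m)
    = Pmu (dot s la - combP m).
  rewrite /Pmu /PA vpfE [dot s la - _ - mu]addrAC -beta_dot; apply: vpfN_widen => m1 m1_sol i.
  rewrite leq_min (mult_le_norm0 psum_pos_rootsA_nth m1_sol) (leq_trans _ (beta_le s)) //.
  apply: (mult_le_norm psum_pos_rootsA_nth (psum_ge0_combP (fun j => m j))).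
  by rewrite m1_sol subrK.
rewrite -/(combP m) PA_Pmu; have [->|Pmu_nz] := eqVneq (Pmu (dot s la - combP m)) 0.
  by rewrite !mulr0.
have := wt_Pmu Pmu_nz; rewrite raddfB /= wt_dot wt_combP => /eqP; rewrite subr_eq => /eqP ->.
by rewrite [wt mu + _]addrC addrK /= exprM.
Qed.

Lemma ncomp_count s k : Pmu k != 0 ->
  ncomp (dot s la - k) = \sum_(m : mset Nmult | combP m == dot s la - k) 1.
Proof.
rewrite /Pmu /PA vpfE => /vpfN_sol[m1 m1_sol].
rewrite /ncomp vpfE (vpfN_widen _ (N2 := Nmult)) => [|m m_sol i].
  by apply: eq_bigr => m _; rewrite expr1n.
have m_le := mult_le_norm0 psum_pos_P m_sol i.
rewrite leq_min m_le (leq_trans _ (beta_le s)) //.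
apply: (mult_le_norm psum_pos_P (psum_ge0_combA m1)).
by rewrite m_sol m1_sol beta_dot addrA subrK.
Qed.

Lemma sum_combP s :
  \sum_(m : mset Nmult) Pmu (dot s la - combP m) =
  \sum_(k <- box n Bbox) Pmu k * ncomp (dot s la - k).
Proof.
rewrite (@big_partition_seq _ _ _ _ (fun m : mset Nmult => dot s la - combP m) _
  (uniq_box n Bbox)) => [|m Pmu_nz]; last first.
  apply: mem_Bbox (wt_Pmu Pmu_nz) => i; rewrite [(dot s la - _) i]ffunE [(- combP m) i]ffunE.
  by rewrite lerBlDr (le_trans (dot_le s i)) // lerDl; apply: sum_P_ge0.
apply: eq_bigr => k _; have [Pmu0|Pmu_nz] := eqVneq (Pmu k) 0.
  by rewrite Pmu0 mul0r big1 // => m /eqP ->.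
rewrite ncomp_count // mulr_sumr; apply: eq_big => [m|m /eqP ->]; last by rewrite mulr1.
by apply/eqP/eqP => [<-|->]; rewrite opprB addrC subrK.
Qed.

Lemma ncomp_pact t x : ncomp (pact t x) = ncomp x.
Proof. exact: vpf_pact P_uniq (P_stable t). Qed.

Lemma alt_dot t k : alt (dot t k) = sgn _ t * alt k.
Proof.
rewrite /alt mulr_sumr (reindex_inj (mulIg t)) /=; apply: eq_bigr => s _.
by rewrite sgnM dotM dotB ncomp_pact; ring.
Qed.

Lemma alt_singular k (i j : 'I_n) : i != j -> (k + rho n) i = (k + rho n) j -> alt k = 0.
Proof.
move=> ij kij; have := alt_dot (tperm i j) k; rewrite dot_tperm_fix // sgn_tperm // mulN1r.
move/eqP; rewrite -addr_eq0 -mulr2n -mulr_natr mulf_eq0 -polyC_natr polyC_eq0 orbF.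
by move/eqP.
Qed.

Lemma alt_regular k : alt k != 0 -> exists t g, nonincr g /\ k = dot t g.
Proof.
move=> alt_nz; apply: exists_dot_nonincr => i j kij; apply/eqP.
by apply: contraTT alt_nz => ij; rewrite negbK (alt_singular ij kij).
Qed.

Lemma KA_Pmu g : KA q g mu = \sum_(t : 'S_n) sgn _ t * Pmu (dot t g).
Proof.
apply: eq_bigr => t _; congr (_ * PA _ _).
by apply/ffunP => i; rewrite !ffunE; ring.
Qed.

Definition term g := \sum_(s : 'S_n) sgn _ s * ncomp (dot s la - g) * KA q g mu.

Lemma term_alt g : term g = \sum_(t : 'S_n) Pmu (dot t g) * alt (dot t g).
Proof.
rewrite /term -mulr_suml -/(alt g) KA_Pmu mulr_sumr; apply: eq_bigr => t _.
by rewrite alt_dot; ring.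
Qed.

Lemma term_mem_box g : term g != 0 -> g \in box n Bbox.
Proof.
rewrite term_alt => /sum_neq0[t]; rewrite mulf_eq0 negb_or alt_dot mulf_eq0 negb_or.
case/and3P => /wt_Pmu Pmu_wt _ /alt_le g_le.
by apply: mem_Bbox g_le _; rewrite -(wt_dot t).
Qed.

Definition dominant := filter (@nonincr n) (box n Bbox).
Definition regular := [seq dot t g | g <- dominant, t <- index_enum {perm 'I_n}].

Lemma uniq_regular : uniq regular.
Proof.
apply: allpairs_uniq; [by rewrite filter_uniq ?uniq_box | exact: index_enum_uniq |].
move=> _ _ /allpairsPdep[g [t [+ _ ->]]] /allpairsPdep[g' [t' [+ _ ->]]] /=.
rewrite !mem_filter => /andP[g_ni _] /andP[g'_ni _].
by case/(dot_nonincr_inj g_ni g'_ni) => -> ->.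
Qed.

Lemma Pmu_alt_supp k : Pmu k * alt k != 0 -> (k \in box n Bbox) && (k \in regular).
Proof.
rewrite mulf_eq0 negb_or => /andP[Pmu_nz alt_nz].
rewrite (mem_Bbox (alt_le alt_nz) (wt_Pmu Pmu_nz)) /=.
have [t [g [g_ni kE]]] := alt_regular alt_nz.
have g_box : g \in box n Bbox.
  move: alt_nz Pmu_nz; rewrite kE alt_dot mulf_eq0 negb_or => /andP[_ /alt_le g_le] /wt_Pmu.
  by rewrite wt_dot; apply: mem_Bbox.
by apply/allpairsPdep; exists g, t; rewrite mem_filter g_ni g_box mem_index_enum.
Qed.

Lemma K_expansion : exists v : {poly int},
  fsum_eq (@nonincr n) term v /\
  \sum_(s : 'S_n) sgn _ s * vpf (rootsA n ++ P) q (beta s) = 'X ^+ `|wt la - wt mu|%N * v.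
Proof.
exists (\sum_(g <- dominant) term g); split.
  exists dominant; split; [by rewrite filter_uniq ?uniq_box | exact: filter_all | |] => //.
  move=> g g_ni g_out; apply/eqP; apply: contraNT g_out => /term_mem_box g_box.
  by rewrite mem_filter g_ni.
under eq_bigr => s _ do rewrite vpf_beta sum_combP mulrCA.
rewrite -mulr_sumr; congr (_ * _).
under eq_bigr => s _ do rewrite mulr_sumr.
rewrite exchange_big /= (eq_bigr (fun k => Pmu k * alt k)) => [|k _]; last first.
  by rewrite /alt mulr_sumr; apply: eq_bigr => s _; ring.
rewrite (big_supp_uniq_seq (B := regular)) ?uniq_box ?uniq_regular //;
  last exact: Pmu_alt_supp.
by rewrite big_allpairs_dep /=; apply: eq_bigr => g _; rewrite term_alt.
Qed.

End Expansion.

Theorem mainTheorem2 (n : nat) (la mu : vec n) :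
  is_partition la -> is_partition mu -> wt mu <= wt la ->
  (exists v : {poly int},
     fsum_eq (@nonincr n)
       (fun g => \sum_(s : 'S_n) sgn _ s * cfun _ (dot s la - g) * KA ('X^2) g mu) v
     /\ KC ('X^2 : {poly int}) la mu = 'X ^+ `|wt la - wt mu|%N * v)
  /\
  (exists v : {poly int},
     fsum_eq (@nonincr n)
       (fun g => \sum_(s : 'S_n) sgn _ s * dfun _ (dot s la - g) * KA ('X^2) g mu) v
     /\ KD ('X^2 : {poly int}) la mu = 'X ^+ `|wt la - wt mu|%N * v).
Proof.
move=> _ _ _; split.
  have le_total (a b : 'I_n) : a != b -> (a <= b)%N || (b <= a)%N by rewrite leq_total.
  exact: (K_expansion la mu (uniq_pairs_with (fun _ _ => id))
           (fun s r => pact_pairs_with s le_total (fun _ c _ => leqnn c))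
           (@pairs_with_ge0 n _) (@wt_pairs_with n _)).
have lt_total (a b : 'I_n) : a != b -> (a < b)%N || (b < a)%N by rewrite -neq_ltn.
have lt_diag (a c : 'I_n) : (a < a)%N -> (c < c)%N by rewrite ltnn.
exact: (K_expansion la mu (uniq_pairs_with (fun _ _ => @ltnW _ _))
         (fun s r => pact_pairs_with s lt_total lt_diag)
         (@pairs_with_ge0 n _) (@wt_pairs_with n _)).
Qed.
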